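(* Let $\mu_\varepsilon$ be a Borel probability measure on $\mathbb{R}$ and $\eta\in\mathcal{M}(\mathbb{R},\mathcal{B}(\mathbb{R}))$. If $\mu_\varepsilon$ or $\eta$ is continuous (has no atoms), then $|\pi_{\eta*\mu_\varepsilon}|(\mathbb{R})\ge1$.
   Context: $\mathcal{M}(\mathbb{R},\mathcal{B}(\mathbb{R}))$ is the space of finite signed Borel measures on $\mathbb{R}$; $|\cdot|$ denotes total variation. $(\mu*\nu)(A):=\int\int\mathbf 1_A(x+y)\nu(dx)\mu(dy)$. $\pi_{\eta*\mu_\varepsilon}:=\delta_{\{0\}}-\eta*\mu_\varepsilon$. *)

From HB Require Import structures.
From mathcomp Require Import all_boot all_order all_algebra.
From mathcomp Require Import all_classical all_reals all_analysis.
Set Implicit Arguments. Unset Strict Implicit. Unset Printing Implicit Defensive.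
Import Order.TTheory GRing.Theory Num.Theory.
Local Open Scope classical_set_scope.
Local Open Scope ring_scope.
Local Open Scope ereal_scope.

Definition tot_var_measure (R : realType) (nu : set R -> \bar R) (A : set R)
  : \bar R :=
  ereal_sup [set s | exists (n : nat) (F : nat -> set R),
     [/\ (forall i, measurable (F i)),
         trivIset `I_n F,
         \bigcup_(i in `I_n) F i = A &
         s = \sum_(i < n) `| nu (F i) |]].

(* Convolution (mu * eta)(A) = int int 1_A(x+y) eta(dx) mu(dy); the inner
   integral of the indicator is eta({x | x + y \in A}). *)
Definition convol (R : realType) (mu : {measure set R -> \bar R})
  (eta : set R -> \bar R) (A : set R) : \bar R :=
  \int[mu]_y eta [set x | A (x + y)%R].

Definition pi_conv (R : realType) (eta : set R -> \bar R)
  (mu : {measure set R -> \bar R}) (A : set R) : \bar R :=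
  @dirac _ R (0%R : R) R A - convol mu eta A.

Definition atomless (R : realType) (nu : set R -> \bar R) : Prop :=
  forall x : R, nu [set x] = 0.

From HB Require Import structures.
From mathcomp Require Import all_boot all_order all_algebra.
From mathcomp Require Import all_classical all_reals all_analysis.
From mathcomp Require Import measurable_realfun.
Import Order.TTheory GRing.Theory Num.Theory.
Local Open Scope classical_set_scope.
Local Open Scope ring_scope.
Local Open Scope ereal_scope.

(* The mass of pi_{eta * mu} at 0 is 1 - (eta * mu)({0}), where
   (eta * mu)({0}) = int eta({-y}) mu(dy).  This integral vanishes: trivially
   when eta is atomless, and when mu is atomless because the charge eta has
   only countably many atoms (all of them atoms of its finite variation
   measure) and countable sets are mu-null.  The partition {0}, R \ {0} then
   bounds the total variation of pi from below by 1. *)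

Section countable_support.
Context {d} {T : measurableType d} {R : realType}.
Hypothesis measurable_set1T : forall x : T, measurable [set x].

Lemma measurable_fun_countable d' (T' : measurableType d') (D : set T)
    (f : T -> T') :
  countable D -> measurable_fun D f.
Proof.
move=> cD _ B _; apply: countable_measurable => //.
by apply: sub_countable cD; apply: subset_card_le; exact: subIsetl.
Qed.

Lemma measurable_fun_countable_support (f : T -> \bar R) :
  countable [set x | f x != 0] -> measurable_fun [set: T] f.
Proof.
set Z := [set x | f x != 0] => cZ.
have mZ : measurable Z by exact: countable_measurable.
rewrite -(setUv Z); apply/measurable_funU => //; first exact: measurableC.
split; first exact: measurable_fun_countable.
apply: (eq_measurable_fun (cst 0)); last exact: measurable_cst.
by move=> x /[1!inE] /negP; rewrite negbK => /eqP.
Qed.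

Lemma countable_negligible (mu : {measure set T -> \bar R}) (Z : set T) :
  (forall x, mu [set x] = 0) -> countable Z -> mu.-negligible Z.
Proof.
move=> mu1 /countable_injP[f injf].
apply: (@negligibleS _ _ _ _ (\bigcup_n [set 'pinv_(cst point) Z f n])).
  by move=> z Zz; exists (f z) => //=; rewrite pinvKV ?inE.
apply: negligible_bigcup => n.
by apply/negligibleP; [exact: measurable_set1T|exact: mu1].
Qed.

Lemma measure_atoms_gt_finite (mu : {measure set T -> \bar R}) (c : R) :
  mu [set: T] \is a fin_num -> (0 < c)%R ->
  finite_set [set x | c%:E < mu [set x]].
Proof.
move=> muT c0.
apply: contrapT => /infiniteP/pcard_leP/injfunPex[/= q q_fun q_inj].
(* n > mu T / c distinct atoms of mass > c would weigh more than T. *)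
pose n := (Num.Def.truncn (fine (mu [set: T]) / c)).+1.
have trivq : trivIset [set: nat] (fun k => [set q k]).
  by move=> i j _ _ [x [/= -> qji]]; apply: q_inj; rewrite ?inE.
have mU : measurable (\big[setU/set0]_(k < n) [set q k]).
  by apply: bigsetU_measurable => k _; exact: measurable_set1T.
have := le_measure mu (mem_set mU) (mem_set measurableT) (@subsetT _ _).
rewrite (measure_bigsetU _ (F := fun k => [set q k])) //.
rewrite -[X in _ <= X -> _](fineK muT); apply/negP; rewrite -ltNge.
apply: (@lt_le_trans _ _ (\sum_(k < n) c%:E)); last first.
  by apply: lee_sum => k _; apply/ltW; exact: q_fun.
rewrite sumEFin sumr_const card_ord lte_fin -mulr_natr mulrC -ltr_pdivrMr //.
exact: truncnS_gt.
Qed.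

Lemma measure_atoms_countable (mu : {measure set T -> \bar R}) :
  mu [set: T] \is a fin_num -> countable [set x | 0 < mu [set x]].
Proof.
move=> muT.
apply: (@sub_countable _ _ _ (\bigcup_n [set x | n.+1%:R^-1%:E < mu [set x]])).
  apply: subset_card_le => x /= mux.
  suff [k kx] : exists k, (k.+1%:R^-1)%:E < mu [set x] by exists k.
  move: mux; case: (mu [set x]) => [r||] //.
  - by rewrite lte_fin => /ltr_add_invr[k]; rewrite add0r; exists k.
  - by exists 0%N; exact: ltry.
apply: bigcup_countable => // n _.
exact/finite_set_countable/measure_atoms_gt_finite.
Qed.

Lemma charge_atoms_countable (nu : {charge set T -> \bar R}) :
  countable [set x | nu [set x] != 0].
Proof.
have [P [N nuPN]] := Hahn_decomposition nu.
apply: (sub_countable _ (@measure_atoms_countable (charge_variation nuPN) _)).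
  apply: subset_card_le => x /= nux.
  apply: lt_le_trans (abse_charge_variation nuPN (measurable_set1T x)).
  by rewrite lt0e abse_eq0 abse_ge0 nux.
exact: fin_num_measure.
Qed.

Lemma integral_countable_support (mu : {measure set T -> \bar R})
    (f : T -> \bar R) :
  (forall x, mu [set x] = 0) -> countable [set x | f x != 0] ->
  \int[mu]_x f x = 0.
Proof.
move=> mu1 cf; rewrite -(integral0 mu setT); apply: ae_eq_integral => //.
  exact: measurable_fun_countable_support.
apply: (@negligibleS _ _ _ mu [set x | f x != 0]).
  by move=> x /= fx; apply/eqP => f0; apply: fx.
exact: countable_negligible.
Qed.

End countable_support.

Lemma set_addr_eq0 {V : zmodType} (y : V) :
  [set x | x + y = 0]%R = [set - y]%R.
Proof.
apply/seteqP; split => x /=; last by move=> ->; rewrite addNr.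
by move/eqP; rewrite addr_eq0 => /eqP.
Qed.

Lemma atomless_convol_set10 {R : realType} (mu : {measure set R -> \bar R})
    (eta : {charge set R -> \bar R}) :
  atomless mu \/ atomless eta -> convol mu eta [set 0%R] = 0.
Proof.
rewrite /convol; case=> [mu0|eta0]; last first.
  by apply: integral0_eq => y _; rewrite /= set_addr_eq0.
apply: (integral_countable_support (@measurable_set1 R) _ _ mu0).
have -> : [set y | eta [set x | x + y = 0]%R != 0] =
    -%R @` [set x | eta [set x] != 0].
  apply/seteqP; split => y /=; rewrite set_addr_eq0.
    by exists (- y)%R; rewrite ?opprK.
  by case=> x ? <-; rewrite opprK.
apply: sub_countable (card_image_le _ _) _.
exact: (charge_atoms_countable (@measurable_set1 R)).
Qed.

Lemma tot_var_measure_ge_setC {R : realType} (nu : set R -> \bar R)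
    (A : set R) :
  measurable A -> `|nu A| + `|nu (~` A)| <= tot_var_measure nu [set: R].
Proof.
move=> mA; apply: ereal_sup_ubound.
exists 2%N, (fun i => if i == 0%N then A else ~` A); split.
- by move=> [|i] //; exact: measurableC.
- by move=> [|[|i]] [|[|j]] //= _ _ [x []].
- apply/seteqP; split => // x _.
  by have [Ax|nAx] := pselect (A x); [exists 0%N|exists 1%N].
- by rewrite !big_ord_recl big_ord0 adde0.
Qed.

Theorem lemma7 (R : realType) (mu_eps : probability R R)
  (eta : {charge set R -> \bar R}) :
  atomless mu_eps \/ atomless eta ->
  1 <= tot_var_measure (pi_conv eta mu_eps) [set: R].
Proof.
move=> atoms.
apply: le_trans (tot_var_measure_ge_setC _ _ (measurable_set1 0%R)).
rewrite /pi_conv atomless_convol_set10 // diracE in_set1 eqxx sube0 abse1.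
exact: leeDl.
Qed.
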